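(* For every weak composition $a$ of length $n$, \[\mathfrak{Q}_a=\sum_{\substack{b\ge a\\ \mathrm{flat}(b)=\mathrm{flat}(a)}}\mathfrak{Q}^{(1)}_b,\] where $b$ ranges over weak compositions of length $n$.
   Context: Weak composition of length $n$: sequence of $n$ nonnegative integers; $\mathrm{flat}(a)$ deletes zero parts; $b\ge a$ means $b_1+\cdots+b_i\ge a_1+\cdots+a_i$ for all $i$. $D(a)$: $a_i$ left-justified boxes in row $i$, row 1 lowest. Quasi-key tableau of shape $a$: filling of $D(a)$ with positive integers such that (1) entries weakly decrease along rows and no entry of row $i$ exceeds $i$; (2) column entries distinct and increasing going up the first column; (3) if an entry $i$ is above an entry $k$ in the same column with $i<k$, there is an entry $j$ immediately right of $k$ with $i<j$; (4) for two rows with the higher strictly longer, an entry $i$ in column $c$ of the lower row and $j$ in column $c+1$ of the higher row satisfy $i<j$. $\mathfrak{Q}_a=\sum_T\prod_ix_i^{\#\{\text{entries } i \text{ in } T\}}$ over quasi-key tableaux of shape $a$; $\mathfrak{Q}^{(1)}_a$ is the same sum restricted to quasi-key tableaux whose first-column entries equal their row indices. *)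

From HB Require Import structures.
From mathcomp Require Import all_boot all_order all_algebra.
From mathcomp Require Import mpoly.
Set Implicit Arguments. Unset Strict Implicit. Unset Printing Implicit Defensive.
Import GRing.Theory.
Local Open Scope ring_scope.

(* Weak compositions are represented as [seq nat]; rows and columns are
   0-indexed internally: row r (0 <= r < size a) is row r+1 of the paper
   (row 1 lowest), column c is column c+1.                                 *)

Definition flat (a : seq nat) : seq nat := [seq x <- a | x != 0%N].

Definition dominates (b a : seq nat) : bool :=
  [forall i : 'I_(size a).+1, (sumn (take i a) <= sumn (take i b))%N].

Definition cellin (a : seq nat) (r c : nat) : bool :=
  (r < size a)%N && (c < nth 0%N a r)%N.

(* Cells of D(a) have
   r < size a and c < sumn a, so the bounded quantifiers cover all cells. *)
Definition quasi_key (a : seq nat) (t : nat -> nat -> nat) : bool :=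
  let n := size a in let m := sumn a in
  [&&
      [forall r : 'I_n, forall c : 'I_m,
          cellin a r c ==> (0 < t r c <= r.+1)%N],
      [forall r : 'I_n, forall c : 'I_m,
          cellin a r c.+1 ==> (t r c.+1 <= t r c)%N],
      [forall r : 'I_n, forall r' : 'I_n, forall c : 'I_m,
          [&& r != r', cellin a r c & cellin a r' c] ==> (t r c != t r' c)],
      [forall r : 'I_n, forall r' : 'I_n,
          [&& (r < r')%N, cellin a r 0 & cellin a r' 0] ==> (t r 0 < t r' 0)%N],
      [forall r : 'I_n, forall r' : 'I_n, forall c : 'I_m,
          [&& (r < r')%N, cellin a r c, cellin a r' c & (t r' c < t r c)%N] ==>
          (cellin a r c.+1 && (t r' c < t r c.+1)%N)] &
      [forall r : 'I_n, forall r' : 'I_n, forall c : 'I_m,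
          [&& (r < r')%N, (nth 0 a r < nth 0 a r')%N, cellin a r c
            & cellin a r' c.+1] ==> (t r c < t r' c.+1)%N]].

(* Fillings as finite functions on rows 'I_n x columns 'I_(sumn a),
   with values in 'I_n.+1 (entries are <= n); cells outside D(a) get 0. *)
Definition filling (n : nat) (a : seq nat) :=
  {ffun 'I_n * 'I_(sumn a) -> 'I_n.+1}.

Definition entry (n : nat) (a : seq nat) (T : filling n a) (r c : nat) : nat :=
  match (insub r : option 'I_n), (insub c : option 'I_(sumn a)) with
  | Some r', Some c' => nat_of_ord (T (r', c'))
  | _, _ => 0%N
  end.

Definition is_qkt (n : nat) (a : seq nat) (T : filling n a) : bool :=
  [forall p : 'I_n * 'I_(sumn a), ~~ cellin a p.1 p.2 ==> (nat_of_ord (T p) == 0%N)]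
  && quasi_key a (entry T).

Definition first_col_id (n : nat) (a : seq nat) (T : filling n a) : bool :=
  [forall r : 'I_n, cellin a r 0 ==> (entry T r 0 == r.+1)].

(* x^T = prod_i x_i^{#entries i in T}; variable 'X_i (i : 'I_n) is x_{i+1} *)
Definition weight (n : nat) (a : seq nat) (T : filling n a) : {mpoly int[n]} :=
  \prod_(i < n) 'X_i ^+ #|[set p : 'I_n * 'I_(sumn a) |
                           cellin a p.1 p.2 && (nat_of_ord (T p) == i.+1)]|.

Definition QK (n : nat) (a : seq nat) : {mpoly int[n]} :=
  \sum_(T : filling n a | is_qkt T) weight T.

Definition QK1 (n : nat) (a : seq nat) : {mpoly int[n]} :=
  \sum_(T : filling n a | is_qkt T && first_col_id T) weight T.

Definition seq_of_ffun (n N : nat) (f : {ffun 'I_n -> 'I_N}) : seq nat :=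
  [seq nat_of_ord (f i) | i <- enum 'I_n].

From HB Require Import structures.
From mathcomp Require Import all_boot all_order all_algebra.
From mathcomp Require Import mpoly.
Set Implicit Arguments. Unset Strict Implicit. Unset Printing Implicit Defensive.

(* In a quasi-key tableau T of shape a, the first-column entries of the nonempty
   rows increase going up and the entry in row i is at most i.  Sliding every
   nonempty row i down to row T(i,1) therefore gives a weak composition b with
   flat b = flat a and b >= a, and a filling of D(b) whose first column reads
   its row indices.  Conditions (1)-(4) only see the relative order and the
   lengths of the nonempty rows, so they survive the slide; the rows of the new
   filling respect the bound because they decrease from their first entry.
   Conversely, b >= a says exactly that the k-th nonempty row of b lies weakly
   below the k-th nonempty row of a, so sliding back up keeps the bound.  The
   slide preserves the entries, hence the weight, and grouping the quasi-key
   tableaux of shape a according to b gives the identity. *)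

Definition nzpos (c : seq nat) : seq nat :=
  [seq j <- iota 0 (size c) | nth 0 c j != 0].

Lemma mem_nzpos c j : (j \in nzpos c) = (j < size c) && (nth 0 c j != 0).
Proof. by rewrite mem_filter mem_iota add0n andbC. Qed.

Lemma nzpos_sorted c : sorted ltn (nzpos c).
Proof. exact: (sorted_filter ltn_trans) (iota_ltn_sorted _ _). Qed.

Lemma nzpos_uniq c : uniq (nzpos c).
Proof. exact: filter_uniq (iota_uniq _ _). Qed.

Lemma nzpos_leq_sorted c : sorted leq (nzpos c).
Proof. by have := nzpos_sorted c; rewrite ltn_sorted_uniq_leq => /andP[]. Qed.

Lemma flat_nzpos c : flat c = map (nth 0 c) (nzpos c).
Proof. by rewrite /flat /nzpos -{1}(mkseq_nth 0 c) /mkseq filter_map. Qed.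

Lemma size_nzpos c : size (nzpos c) = size (flat c).
Proof. by rewrite flat_nzpos size_map. Qed.

Lemma nth_flat c i :
  i < size (nzpos c) -> nth 0 (flat c) i = nth 0 c (nth 0 (nzpos c) i).
Proof. by move=> ic; rewrite flat_nzpos (nth_map 0). Qed.

Lemma zero_notin_flat c : 0 \notin flat c.
Proof. by rewrite mem_filter eqxx. Qed.

Lemma size_nzpos_eq a b : flat b = flat a -> size (nzpos b) = size (nzpos a).
Proof. by rewrite !size_nzpos => ->. Qed.

Lemma sumn_flat c : sumn (flat c) = sumn c.
Proof. by elim: c => //= -[|x] c IHc; rewrite /= IHc. Qed.

Lemma nth_leq_sumn c r : nth 0 c r <= sumn c.
Proof.
elim: c r => [|x c IHc] [|r] //=; first exact: leq_addr.
exact: leq_trans (IHc r) (leq_addl _ _).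
Qed.

Lemma ltn_nzpos_index c j j' : j \in nzpos c -> j' \in nzpos c ->
  j < j' -> index j (nzpos c) < index j' (nzpos c).
Proof.
move=> jc j'c; apply: contraTT; rewrite -!leqNgt.
exact: sorted_leq_index leq_trans leqnn _ (nzpos_leq_sorted c) j' j j'c jc.
Qed.

Definition place_parts (n : nat) (v L : seq nat) : seq nat :=
  [seq (if j \in v then nth 0 L (index j v) else 0) | j <- iota 0 n].

Lemma size_place_parts n v L : size (place_parts n v L) = n.
Proof. by rewrite size_map size_iota. Qed.

Lemma nth_place_parts n v L j : j < n ->
  nth 0 (place_parts n v L) j = if j \in v then nth 0 L (index j v) else 0.
Proof. by move=> jn; rewrite (nth_map 0) ?size_iota // nth_iota. Qed.

Lemma nth_place_parts_leq n v L j : nth 0 (place_parts n v L) j <= sumn L.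
Proof.
case: (ltnP j n) => [jn|nj]; last by rewrite nth_default // size_place_parts.
by rewrite nth_place_parts //; case: ifP => // _; apply: nth_leq_sumn.
Qed.

Section PlaceParts.
Variables (n : nat) (v L : seq nat).
Hypotheses (v_sorted : sorted ltn v) (v_lt : {in v, forall j, j < n}).
Hypotheses (size_vL : size v = size L) (L_neq0 : 0 \notin L).

Lemma nzpos_place_parts : nzpos (place_parts n v L) = v.
Proof.
apply: (irr_sorted_eq ltn_trans ltnn) => //; first exact: nzpos_sorted.
move=> j; rewrite mem_nzpos size_place_parts.
case jn: (j < n) => /=; last by apply/esym/negbTE; apply: contraFN jn => /v_lt.
rewrite nth_place_parts //; case jv: (j \in v) => //=.
by apply: contra L_neq0 => /eqP <-; rewrite mem_nth // -size_vL index_mem.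
Qed.

Lemma flat_place_parts : flat (place_parts n v L) = L.
Proof.
have v_uniq : uniq v by move: v_sorted; rewrite ltn_sorted_uniq_leq => /andP[].
rewrite flat_nzpos nzpos_place_parts.
apply: (@eq_from_nth _ 0); rewrite ?size_map // => i iv.
have vi : nth 0 v i \in v by apply: mem_nth.
by rewrite (nth_map 0) // nth_place_parts ?v_lt // vi index_uniq.
Qed.

End PlaceParts.

Lemma place_parts_nzpos c : place_parts (size c) (nzpos c) (flat c) = c.
Proof.
apply: (@eq_from_nth _ 0); rewrite ?size_place_parts // => j jc.
rewrite nth_place_parts //; case jp: (j \in nzpos c).
  by rewrite nth_flat ?index_mem // nth_index.
by move: jp; rewrite mem_nzpos jc /= => /negbFE/eqP.
Qed.

Lemma sumn_take_iota c x :
  sumn (take x c) = \sum_(j <- iota 0 (size c) | j < x) nth 0 c j.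
Proof.
elim: c x => [|y c IHc] x; first by rewrite big_nil.
rewrite /= big_cons -add1n iotaDl big_map; by case: x => [|x] /=; [rewrite big1 | rewrite IHc].
Qed.

Lemma sumn_take_nzpos c x :
  sumn (take x c) =
  \sum_(i < size (flat c) | nth 0 (nzpos c) i < x) nth 0 (flat c) i.
Proof.
rewrite sumn_take_iota (bigID (fun j => nth 0 c j == 0)) /=.
rewrite big1 ?add0n => [|j /andP[_ /eqP //]].
rewrite (eq_bigl (fun j => (nth 0 c j != 0) && (j < x))) => [|j]; last exact: andbC.
rewrite -big_filter_cond -/(nzpos c) (big_nth 0) big_mkord -size_nzpos.
by apply: eq_bigr => i _; rewrite nth_flat.
Qed.

Lemma leq_sum_subset (k : nat) (P Q : pred 'I_k) (F : 'I_k -> nat) :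
  (forall i, P i -> Q i) -> \sum_(i | P i) F i <= \sum_(i | Q i) F i.
Proof. exact: (sub_le_big leqnn (fun m n => leq_addr n m)). Qed.

Section Dominance.
Variables a b : seq nat.
Hypothesis flat_ba : flat b = flat a.
Local Notation L := (flat a).

Lemma dominates_nzposP :
  reflect (forall i, i < size L -> nth 0 (nzpos b) i <= nth 0 (nzpos a) i)
          (dominates b a).
Proof.
apply: (iffP forallP) => [dom i iL | le_ba x]; last first.
  rewrite !sumn_take_nzpos flat_ba; apply: leq_sum_subset => i.
  exact: leq_ltn_trans (le_ba i (ltn_ord i)).
(* If the i-th nonempty row of b lay above the i-th one of a, at height p the
   partial sum of a would contain the parts 0..i and that of b only 0..i-1. *)
rewrite leqNgt; apply/negP => lt_ab; set p := nth 0 (nzpos a) i.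
have iza : i < size (nzpos a) by rewrite size_nzpos.
have p_lt : p.+1 < (size a).+1.
  by have := mem_nth 0 iza; rewrite mem_nzpos => /andP[].
have := dom (Ordinal p_lt); rewrite /= !sumn_take_nzpos flat_ba.
have L_gt0 : 0 < nth 0 L i.
  by rewrite lt0n; apply: contraNneq (zero_notin_flat a) => <-; apply: mem_nth.
have lhs : \sum_(l < size L | l <= i) nth 0 L l <=
           \sum_(l < size L | nth 0 (nzpos a) l < p.+1) nth 0 L l.
  apply: leq_sum_subset => l li; rewrite ltnS.
  by apply: (sorted_leq_nth leq_trans leqnn 0 (nzpos_leq_sorted a)) li;
    rewrite inE ?size_nzpos.
have rhs : \sum_(l < size L | nth 0 (nzpos b) l < p.+1) nth 0 L l <=
           \sum_(l < size L | l < i) nth 0 L l.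
  apply: leq_sum_subset => l; apply: contraTT; rewrite -!leqNgt => il.
  apply: leq_trans lt_ab _.
  by apply: (sorted_leq_nth leq_trans leqnn 0 (nzpos_leq_sorted b)) il;
    rewrite inE size_nzpos flat_ba.
have split_i : \sum_(l < size L | l <= i) nth 0 L l =
               nth 0 L i + \sum_(l < size L | l < i) nth 0 L l.
  rewrite (bigD1 (Ordinal iL)) //=; congr (_ + _).
  by apply: eq_bigl => l; rewrite ltn_neqAle andbC -val_eqE.
move=> dom_p; have := leq_trans lhs (leq_trans dom_p rhs).
by rewrite split_i -{2}[\sum_(_ < _ | _) _]add0n leq_add2r leqNgt L_gt0.
Qed.
End Dominance.

Lemma cellin_bounds a r c : cellin a r c -> r < size a /\ c < sumn a.
Proof. by case/andP=> ra ca; split=> //; apply: leq_trans ca (nth_leq_sumn a r). Qed.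

Lemma cellinS a r c : cellin a r c.+1 -> cellin a r c.
Proof. by case/andP=> ra ca; rewrite /cellin ra ltnW. Qed.

Lemma cellin0 a r : cellin a r 0 = (r \in nzpos a).
Proof. by rewrite mem_nzpos /cellin lt0n. Qed.

Lemma cellin_nzpos a r c : cellin a r c -> r \in nzpos a.
Proof. by case/andP=> ra ca; rewrite mem_nzpos ra -lt0n (leq_ltn_trans _ ca). Qed.

Definition entries_bounded a (t : nat -> nat -> nat) :=
  forall r c, cellin a r c -> 0 < t r c <= r.+1.

(* Conditions (1)-(4); unlike the bound on the entries, they only involve the
   relative order and the lengths of the nonempty rows. *)
Definition quasi_key_rel a (t : nat -> nat -> nat) :=
  [/\ forall r c, cellin a r c.+1 -> t r c.+1 <= t r c,
      forall r r' c, r != r' -> cellin a r c -> cellin a r' c -> t r c != t r' c,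
      forall r r', r < r' -> cellin a r 0 -> cellin a r' 0 -> t r 0 < t r' 0,
      forall r r' c, r < r' -> cellin a r c -> cellin a r' c -> t r' c < t r c ->
        cellin a r c.+1 && (t r' c < t r c.+1) &
      forall r r' c, r < r' -> nth 0 a r < nth 0 a r' -> cellin a r c ->
        cellin a r' c.+1 -> t r c < t r' c.+1].

Lemma quasi_keyP a t :
  reflect (entries_bounded a t /\ quasi_key_rel a t) (quasi_key a t).
Proof.
apply: (iffP andP) => [[h1 /and5P[h2 h3 h4 h5 h6]] | [h1 [h2 h3 h4 h5 h6]]]; last first.
  split; first by apply/'forall_forallP => r c; apply/implyP/h1.
  apply/and5P; split.
  - by apply/'forall_forallP => r c; apply/implyP/h2.
  - by apply/'forall_'forall_forallP => r r' c; apply/implyP => /and3P[]; apply: h3.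
  - by apply/'forall_forallP => r r'; apply/implyP => /and3P[]; apply: h4.
  - by apply/'forall_'forall_forallP => r r' c; apply/implyP => /and4P[]; apply: h5.
  - by apply/'forall_'forall_forallP => r r' c; apply/implyP => /and4P[]; apply: h6.
split; last split.
- move=> r c rc; have [ra ca] := cellin_bounds rc.
  by move/forallP/(_ (Ordinal ra))/forallP/(_ (Ordinal ca))/implyP: h1; apply.
- move=> r c rc; have [ra ca] := cellin_bounds (cellinS rc).
  by move/forallP/(_ (Ordinal ra))/forallP/(_ (Ordinal ca))/implyP: h2; apply.
- move=> r r' c ne rc r'c.
  have [[ra ca] [r'a _]] := (cellin_bounds rc, cellin_bounds r'c).
  move/forallP/(_ (Ordinal ra))/forallP/(_ (Ordinal r'a))/forallP/(_ (Ordinal ca)): h3.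
  by move/implyP; apply; rewrite /= ne rc r'c.
- move=> r r' lt rc r'c.
  have [[ra _] [r'a _]] := (cellin_bounds rc, cellin_bounds r'c).
  move/forallP/(_ (Ordinal ra))/forallP/(_ (Ordinal r'a)): h4.
  by move/implyP; apply; rewrite /= lt rc r'c.
- move=> r r' c lt rc r'c tl.
  have [[ra ca] [r'a _]] := (cellin_bounds rc, cellin_bounds r'c).
  move/forallP/(_ (Ordinal ra))/forallP/(_ (Ordinal r'a))/forallP/(_ (Ordinal ca)): h5.
  by move/implyP; apply; rewrite /= lt rc r'c.
- move=> r r' c lt ln rc r'c.
  have [[ra ca] [r'a _]] := (cellin_bounds rc, cellin_bounds r'c).
  move/forallP/(_ (Ordinal ra))/forallP/(_ (Ordinal r'a))/forallP/(_ (Ordinal ca)): h6.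
  by move/implyP; apply; rewrite /= lt ln rc r'c.
Qed.

Definition vanishes_off a (t : nat -> nat -> nat) :=
  forall r c, ~~ cellin a r c -> t r c = 0.

Section Fillings.
Variables (n : nat) (a : seq nat).

Lemma entry_ord (T : filling n a) (r : 'I_n) (c : 'I_(sumn a)) :
  entry T r c = T (r, c).
Proof. by rewrite /entry !valK. Qed.

Lemma entry_out (T : filling n a) r c :
  (n <= r) || (sumn a <= c) -> entry T r c = 0.
Proof.
rewrite /entry; case/orP => [nr|ac]; first by rewrite insubN -?leqNgt.
by case: insub => // ?; rewrite insubN -?leqNgt.
Qed.

Lemma entry_leq (T : filling n a) r c : entry T r c <= n.
Proof. by rewrite /entry; do 2![case: insub => // ?]; rewrite -ltnS. Qed.

Lemma filling_eq (T1 T2 : filling n a) :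
  (forall r c, entry T1 r c = entry T2 r c) -> T1 = T2.
Proof.
by move=> eqT; apply/ffunP => -[r c]; apply/val_inj; rewrite /= -!entry_ord eqT.
Qed.

Definition filling_of (t : nat -> nat -> nat) : filling n a :=
  [ffun p : 'I_n * 'I_(sumn a) => inord (t p.1 p.2)].

Lemma entry_filling_of t r c :
  t r c <= n -> ((n <= r) || (sumn a <= c) -> t r c = 0) ->
  entry (filling_of t) r c = t r c.
Proof.
move=> tn t_out; case: (boolP ((n <= r) || (sumn a <= c))) => [out|].
  by rewrite entry_out ?t_out.
rewrite negb_or -!ltnNge => /andP[rn ca].
by rewrite (entry_ord _ (Ordinal rn) (Ordinal ca)) ffunE inordK.
Qed.

Lemma is_qktP (T : filling n a) :
  reflect [/\ vanishes_off a (entry T), entries_bounded a (entry T)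
            & quasi_key_rel a (entry T)] (is_qkt T).
Proof.
apply: (iffP andP) => [[/forallP T_off /quasi_keyP[bd rel]] | [T_off bd rel]].
  split=> // r c rc; case: (boolP ((n <= r) || (sumn a <= c))) => [|in_nm].
    exact: entry_out.
  move: in_nm; rewrite negb_or -!ltnNge => /andP[rn ca].
  rewrite (entry_ord _ (Ordinal rn) (Ordinal ca)).
  exact/eqP/(implyP (T_off (_, _))).
split; last exact/quasi_keyP.
by apply/forallP => -[r c]; apply/implyP => rc; rewrite /= -entry_ord T_off.
Qed.

Lemma first_col_idP (T : filling n a) : size a = n ->
  reflect (forall r, cellin a r 0 -> entry T r 0 = r.+1) (first_col_id T).
Proof.
move=> size_a; apply: (iffP forallP) => [fc r r0 | fc r]; last first.
  by apply/implyP => r0; rewrite fc.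
have [ra _] := cellin_bounds r0; rewrite size_a in ra.
exact/eqP/(implyP (fc (Ordinal ra))).
Qed.

End Fillings.

Section Relabel.
Variables (a b : seq nat) (t s : nat -> nat -> nat) (tau : nat -> nat).
Hypothesis tau_row :
  {in nzpos b, forall j, tau j < size a /\ nth 0 a (tau j) = nth 0 b j}.
Hypothesis tau_mono : {in nzpos b &, {homo tau : j j' / j < j'}}.
Hypothesis s_tau : {in nzpos b, forall j c, s j c = t (tau j) c}.

Lemma cellin_relabel j c : cellin b j c ->
  [/\ j \in nzpos b, cellin a (tau j) c & forall c', s j c' = t (tau j) c'].
Proof.
move=> jc; have jb := cellin_nzpos jc; have [ta ea] := tau_row jb.
by split=> //; [rewrite /cellin ta ea; case/andP: jc | exact: s_tau].
Qed.

Lemma quasi_key_rel_relabel : quasi_key_rel a t -> quasi_key_rel b s.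
Proof.
case=> h1 h2 h3 h4 h5; split.
- by move=> j c /cellin_relabel[_ jc e]; rewrite !e; apply: h1.
- move=> j j' c ne /cellin_relabel[jb jc e] /cellin_relabel[j'b j'c e'].
  rewrite e e'; apply: h2 jc j'c.
  case: (ltngtP j j') ne => // [lt|gt] _; rewrite neq_ltn.
    by rewrite tau_mono.
  by rewrite (tau_mono j'b jb gt) orbT.
- move=> j j' lt /cellin_relabel[jb jc e] /cellin_relabel[j'b j'c e'].
  by rewrite e e'; apply: h3 => //; apply: tau_mono.
- move=> j j' c lt /cellin_relabel[jb jc e] /cellin_relabel[j'b j'c e'].
  rewrite !e e' => tl; have /andP[jc1 ->] := h4 _ _ _ (tau_mono jb j'b lt) jc j'c tl.
  rewrite andbT /cellin -(tau_row jb).2; case/andP: jc1 => _ ->.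
  by move: jb; rewrite mem_nzpos => /andP[->].
- move=> j j' c lt ln /cellin_relabel[jb jc e] /cellin_relabel[j'b j'c e'].
  rewrite e e'; apply: h5 => //; first exact: tau_mono.
  by rewrite (tau_row jb).2 (tau_row j'b).2.
Qed.

End Relabel.

Definition row_match (a b : seq nat) (j : nat) : nat :=
  nth 0 (nzpos a) (index j (nzpos b)).

Definition slide_rows (a b : seq nat) (t : nat -> nat -> nat) (j c : nat) : nat :=
  if j \in nzpos b then t (row_match a b j) c else 0.

Definition row_count a (t : nat -> nat -> nat) (x r : nat) : nat :=
  count (fun c => t r c == x) (iota 0 (nth 0 a r)).

Section SlideRows.
Variables a b : seq nat.
Hypothesis flat_ba : flat b = flat a.
Local Notation tau := (row_match a b).

Lemma index_nzpos_lt j : j \in nzpos b -> index j (nzpos b) < size (nzpos a).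
Proof. by rewrite -(size_nzpos_eq flat_ba) index_mem. Qed.

Lemma row_match_nzpos j : j \in nzpos b -> tau j \in nzpos a.
Proof. by move/index_nzpos_lt; apply: mem_nth. Qed.

Lemma index_row_match j :
  j \in nzpos b -> index (tau j) (nzpos a) = index j (nzpos b).
Proof. by move/index_nzpos_lt => lt; rewrite /row_match index_uniq ?nzpos_uniq. Qed.

Lemma nth_row_match j : j \in nzpos b -> nth 0 a (tau j) = nth 0 b j.
Proof.
move=> jb; have lt := index_nzpos_lt jb.
by rewrite -nth_flat // -flat_ba nth_flat ?index_mem // nth_index.
Qed.

Lemma row_match_mono : {in nzpos b &, {homo tau : j j' / j < j'}}.
Proof.
move=> j j' jb j'b lt; rewrite /row_match.
apply: (sorted_ltn_nth ltn_trans 0 (nzpos_sorted a)); rewrite ?inE ?index_nzpos_lt //.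
exact: ltn_nzpos_index.
Qed.

Lemma map_row_match : map tau (nzpos b) = nzpos a.
Proof.
have eq_size := size_nzpos_eq flat_ba.
apply: (@eq_from_nth _ 0); rewrite size_map eq_size // => i ia.
by rewrite (nth_map 0) ?eq_size // /row_match index_uniq ?nzpos_uniq ?eq_size.
Qed.

Lemma cellin_row_match j c : j \in nzpos b -> cellin b j c = cellin a (tau j) c.
Proof.
move=> jb; rewrite /cellin nth_row_match //.
have := row_match_nzpos jb; rewrite !mem_nzpos => /andP[-> _].
by move: jb; rewrite mem_nzpos => /andP[->].
Qed.

Variables (t s : nat -> nat -> nat).
Hypothesis s_slide : s =2 slide_rows a b t.

Lemma vanishes_off_slide : vanishes_off a t -> vanishes_off b s.
Proof.
move=> t_off j c; rewrite s_slide /slide_rows; case: ifP => // jb jc.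
by apply: t_off; rewrite -cellin_row_match.
Qed.

Lemma quasi_key_rel_slide : quasi_key_rel a t -> quasi_key_rel b s.
Proof.
apply: quasi_key_rel_relabel => [j jb | | j jb c]; last first.
- by rewrite s_slide /slide_rows jb.
- exact: row_match_mono.
  split; last exact: nth_row_match.
  by have := row_match_nzpos jb; rewrite mem_nzpos => /andP[].
Qed.

Lemma row_count_slide x :
  \sum_(j <- nzpos b) row_count b s x j = \sum_(r <- nzpos a) row_count a t x r.
Proof.
rewrite -map_row_match big_map; apply: eq_big_seq => j jb.
rewrite /row_count nth_row_match //.
by apply: eq_count => c; rewrite s_slide /slide_rows jb.
Qed.

End SlideRows.

Lemma slide_rowsK a b t s : flat b = flat a -> vanishes_off a t ->
  s =2 slide_rows a b t -> slide_rows b a s =2 t.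
Proof.
move=> flat_ba t_off s_slide r c; rewrite /slide_rows; case: ifP => ra; last first.
  by rewrite t_off //; apply: contraFN ra; apply: cellin_nzpos.
rewrite s_slide /slide_rows (row_match_nzpos (esym flat_ba) ra) /row_match.
by rewrite (index_row_match (esym flat_ba) ra) nth_index.
Qed.

Lemma iota0_index k : iota 0 k = index_iota 0 k.
Proof. by rewrite /index_iota subn0. Qed.

Lemma count_iota_sum (Q : pred nat) k m :
  k <= m -> count Q (iota 0 k) = \sum_(c < m | (c < k) && Q c) 1.
Proof.
move=> km; rewrite -sum1_count iota0_index (big_nat_widen _ _ _ _ _ km).
by rewrite big_mkord; apply: eq_bigl => c; rewrite andbC.
Qed.

Lemma sum_nzpos a (F : nat -> nat) :
  {in [pred r | nth 0 a r == 0], forall r, F r = 0} ->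
  \sum_(r <- nzpos a) F r = \sum_(r < size a) F r.
Proof.
move=> F0; rewrite big_filter big_mkcond iota0_index big_mkord.
by apply: eq_bigr => r _; case: eqP => // /eqP r0; rewrite F0.
Qed.

Lemma card_entries_eq n a (T : filling n a) x : size a = n ->
  #|[set p : 'I_n * 'I_(sumn a) | cellin a p.1 p.2 && (nat_of_ord (T p) == x)]| =
  \sum_(r <- nzpos a) row_count a (entry T) x r.
Proof.
move=> size_a; rewrite sum_nzpos => [|r /eqP r0]; last by rewrite /row_count r0.
pose F (r : 'I_n) (c : 'I_(sumn a)) := (cellin a r c && (entry T r c == x) : nat).
rewrite -sum1dep_card big_mkcond (eq_bigr (fun p => F p.1 p.2)); last first.
  by move=> [r c] _; rewrite /F entry_ord; case: (_ && _).
rewrite -(pair_bigA _ F) size_a; apply: eq_bigr => r _.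
rewrite /row_count (count_iota_sum _ (nth_leq_sumn a r)) [RHS]big_mkcond.
by apply: eq_bigr => c _; rewrite /F /cellin size_a ltn_ord; case: (_ && _).
Qed.

Lemma row_leq_first_col a t r c :
  quasi_key_rel a t -> cellin a r c -> t r c <= t r 0.
Proof.
case=> row_dec _ _ _ _; elim: c => // c IHc rc.
exact: leq_trans (row_dec _ _ rc) (IHc (cellinS rc)).
Qed.

Section FirstColumnShape.
Variables (n : nat) (a : seq nat).
Hypothesis size_a : size a = n.

Definition first_col_rows (T : filling n a) : seq nat :=
  [seq (entry T r 0).-1 | r <- nzpos a].

Definition slid_shape (T : filling n a) : seq nat :=
  place_parts n (first_col_rows T) (flat a).

Definition slid_shape_ffun (T : filling n a) : {ffun 'I_n -> 'I_(sumn a).+1} :=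
  [ffun j : 'I_n => inord (nth 0 (slid_shape T) j)].

Lemma seq_of_slid_shape_ffun T : seq_of_ffun (slid_shape_ffun T) = slid_shape T.
Proof.
rewrite /seq_of_ffun -[RHS](mkseq_nth 0) size_place_parts /mkseq -val_enum_ord.
rewrite -map_comp; apply: eq_map => j /=.
by rewrite ffunE inordK // ltnS -sumn_flat nth_place_parts_leq.
Qed.

Section Tableau.
Variable T : filling n a.
Hypothesis T_qkt : is_qkt T.

Lemma first_col_gt0 r : r \in nzpos a -> 0 < entry T r 0.
Proof. by rewrite -cellin0 => r0; case/is_qktP: T_qkt => _ /(_ r 0 r0)/andP[]. Qed.

Lemma first_col_pred_leq r : r \in nzpos a -> (entry T r 0).-1 <= r.
Proof.
rewrite -cellin0 => r0; case/is_qktP: T_qkt => _ /(_ r 0 r0)/andP[_].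
by rewrite -subn1 leq_subLR add1n.
Qed.

Lemma first_col_rows_leq i :
  i < size (flat a) -> nth 0 (first_col_rows T) i <= nth 0 (nzpos a) i.
Proof.
by rewrite -size_nzpos => ia; rewrite (nth_map 0) // first_col_pred_leq ?mem_nth.
Qed.

Lemma first_col_rows_sorted : sorted ltn (first_col_rows T).
Proof.
case/is_qktP: T_qkt => _ _ [_ _ col_incr _ _].
apply: (homo_sorted_in (P := mem (nzpos a))) (nzpos_sorted a); last exact: allss.
move=> r r' /= ra r'a lt; rewrite -ltnS !prednK ?first_col_gt0 //.
by apply: col_incr; rewrite ?cellin0.
Qed.

Lemma first_col_rows_lt : {in first_col_rows T, forall j, j < n}.
Proof.
move=> _ /mapP[r ra ->]; apply: leq_ltn_trans (first_col_pred_leq ra) _.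
by move: ra; rewrite mem_nzpos size_a => /andP[].
Qed.

Lemma size_first_col_rows : size (first_col_rows T) = size (flat a).
Proof. by rewrite size_map size_nzpos. Qed.

Lemma nzpos_slid_shape : nzpos (slid_shape T) = first_col_rows T.
Proof.
exact: nzpos_place_parts first_col_rows_sorted first_col_rows_lt
  size_first_col_rows (zero_notin_flat a).
Qed.

Lemma flat_slid_shape : flat (slid_shape T) = flat a.
Proof.
exact: flat_place_parts first_col_rows_sorted first_col_rows_lt
  size_first_col_rows (zero_notin_flat a).
Qed.

Lemma slid_shape_admissible :
  dominates (seq_of_ffun (slid_shape_ffun T)) a &&
  (flat (seq_of_ffun (slid_shape_ffun T)) == flat a).
Proof.
rewrite seq_of_slid_shape_ffun flat_slid_shape eqxx andbT.
apply/(dominates_nzposP flat_slid_shape) => i ia.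
by rewrite nzpos_slid_shape first_col_rows_leq.
Qed.

End Tableau.
End FirstColumnShape.

Lemma eq_big_bij (R : Type) (idx : R) (op : Monoid.com_law idx) (I J : finType)
    (P : pred I) (Q : pred J) (h : I -> J) (h' : J -> I) (F : I -> R) (G : J -> R) :
  (forall i, P i -> Q (h i)) -> (forall j, Q j -> P (h' j)) ->
  (forall i, P i -> h' (h i) = i) -> (forall j, Q j -> h (h' j) = j) ->
  (forall i, P i -> G (h i) = F i) ->
  \big[op/idx]_(i | P i) F i = \big[op/idx]_(j | Q j) G j.
Proof.
move=> PQ QP hK h'K GF; rewrite (reindex_onto h h' h'K).
apply: eq_big => [i|i Pi]; last by rewrite GF.
apply/idP/idP => [Pi|/andP[Qhi /eqP <-]]; last exact: QP.
by rewrite PQ //= hK.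
Qed.

Lemma entry_slide n a b (T : filling n a) : size b = n -> flat b = flat a ->
  entry (filling_of n b (slide_rows a b (entry T))) =2 slide_rows a b (entry T).
Proof.
move=> size_b flat_ba j c; apply: entry_filling_of => [|out].
  by rewrite /slide_rows; case: ifP => // _; apply: entry_leq.
rewrite /slide_rows; case: ifP => // jb; apply: entry_out.
case/orP: out => [nj|bc]; first by move: jb; rewrite mem_nzpos size_b ltnNge nj.
by rewrite -sumn_flat -flat_ba sumn_flat bc orbT.
Qed.

Section SlideBijection.
Variables (n : nat) (a : seq nat) (f : {ffun 'I_n -> 'I_(sumn a).+1}).
Hypothesis size_a : size a = n.
Local Notation b := (seq_of_ffun f).
Hypothesis f_admissible : dominates b a && (flat b == flat a).

Lemma size_b : size b = n.
Proof. by rewrite size_map size_enum_ord. Qed.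

Lemma flat_ba : flat b = flat a.
Proof. by case/andP: f_admissible => _ /eqP. Qed.

Definition slide_down (T : filling n a) : filling n b :=
  filling_of n b (slide_rows a b (entry T)).

Definition slide_up (S : filling n b) : filling n a :=
  filling_of n a (slide_rows b a (entry S)).

Lemma entry_slide_down T : entry (slide_down T) =2 slide_rows a b (entry T).
Proof. exact: entry_slide size_b flat_ba. Qed.

Lemma entry_slide_up S : entry (slide_up S) =2 slide_rows b a (entry S).
Proof. exact: entry_slide size_a (esym flat_ba). Qed.

Lemma first_col_row_match T : is_qkt T -> slid_shape_ffun T = f ->
  {in nzpos b, forall j, entry T (row_match a b j) 0 = j.+1}.
Proof.
move=> T_qkt shapeT j; rewrite /row_match -shapeT seq_of_slid_shape_ffun.
rewrite (nzpos_slid_shape size_a T_qkt) => jT.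
have ja : index j (first_col_rows T) < size (nzpos a).
  by rewrite -(size_map (fun r => (entry T r 0).-1)) index_mem.
have := nth_index 0 jT; rewrite {1}/first_col_rows (nth_map 0) // => {2}<-.
by rewrite prednK // (first_col_gt0 T_qkt) ?mem_nth.
Qed.

Lemma slide_down_qkt T : is_qkt T && (slid_shape_ffun T == f) ->
  is_qkt (slide_down T) && first_col_id (slide_down T).
Proof.
case/andP=> T_qkt /eqP shapeT; have /is_qktP[T_off bd rel] := T_qkt.
have col1 := first_col_row_match T_qkt shapeT.
apply/andP; split; last first.
  apply/(first_col_idP _ size_b) => j j0.
  by rewrite entry_slide_down /slide_rows (cellin_nzpos j0) col1 ?(cellin_nzpos j0).
apply/is_qktP; split.
- by apply: (vanishes_off_slide flat_ba (entry_slide_down T)).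
- move=> j c jc; have jb := cellin_nzpos jc.
  rewrite entry_slide_down /slide_rows jb -(col1 j jb).
  rewrite (cellin_row_match flat_ba) // in jc.
  by case/andP: (bd _ _ jc) => -> _; apply: row_leq_first_col rel jc.
- by apply: (quasi_key_rel_slide flat_ba (entry_slide_down T)).
Qed.

Lemma row_match_up_leq r : r \in nzpos a -> row_match b a r <= r.
Proof.
case/andP: f_admissible => /(dominates_nzposP flat_ba) dom _ ra.
by rewrite /row_match -{2}(nth_index 0 ra) dom // -size_nzpos index_mem.
Qed.

Lemma slide_up_qkt S : is_qkt S && first_col_id S ->
  is_qkt (slide_up S) && (slid_shape_ffun (slide_up S) == f).
Proof.
case/andP=> S_qkt /(first_col_idP _ size_b) col1.
have /is_qktP[S_off bd rel] := S_qkt.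
have flat_ab := esym flat_ba.
have up_qkt : is_qkt (slide_up S).
  apply/is_qktP; split.
  - by apply: (vanishes_off_slide flat_ab (entry_slide_up S)).
  - move=> r c rc; have ra := cellin_nzpos rc.
    rewrite entry_slide_up /slide_rows ra (cellin_row_match flat_ab) // in rc *.
    case/andP: (bd _ _ rc) => -> /leq_trans; apply.
    by rewrite ltnS row_match_up_leq.
  - by apply: (quasi_key_rel_slide flat_ab (entry_slide_up S)).
rewrite up_qkt; apply/eqP/ffunP => j.
have rows_up : first_col_rows (slide_up S) = nzpos b.
  rewrite -(map_row_match flat_ab); apply/eq_in_map => r ra.
  rewrite entry_slide_up /slide_rows ra col1 //.
  by rewrite cellin0 (row_match_nzpos flat_ab).
have shape_up : slid_shape (slide_up S) = b.
  by rewrite /slid_shape rows_up -flat_ba -[in RHS](place_parts_nzpos b) size_b.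
rewrite ffunE shape_up /seq_of_ffun (nth_map j) ?size_enum_ord //.
by rewrite nth_ord_enum inord_val.
Qed.

Lemma slide_downK T : is_qkt T -> slide_up (slide_down T) = T.
Proof.
case/is_qktP=> T_off _ _; apply: filling_eq => r c; rewrite entry_slide_up.
exact: slide_rowsK flat_ba T_off (entry_slide_down T) r c.
Qed.

Lemma slide_upK S : is_qkt S -> slide_down (slide_up S) = S.
Proof.
case/is_qktP=> S_off _ _; apply: filling_eq => j c; rewrite entry_slide_down.
exact: slide_rowsK (esym flat_ba) S_off (entry_slide_up S) j c.
Qed.

Lemma weight_slide_down T : weight (slide_down T) = weight T.
Proof.
apply: eq_bigr => i _; rewrite !card_entries_eq ?size_b //.
by rewrite (row_count_slide flat_ba (entry_slide_down T)).
Qed.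

End SlideBijection.

Unset Implicit Arguments.
Local Open Scope ring_scope.

Theorem lemma2p20 (n : nat) (a : seq nat) (Ha : size a = n) :
  QK n a =
  \sum_(f : {ffun 'I_n -> 'I_(sumn a).+1} |
          dominates (seq_of_ffun f) a && (flat (seq_of_ffun f) == flat a))
     QK1 n (seq_of_ffun f).
Proof.
rewrite /QK (partition_big (@slid_shape_ffun n a) (fun f =>
  dominates (seq_of_ffun f) a && (flat (seq_of_ffun f) == flat a))); last first.
  by move=> T; apply: slid_shape_admissible.
apply: eq_bigr => f f_adm; rewrite /QK1.
apply: (@eq_big_bij _ _ _ _ _ _ _ (slide_down f) (@slide_up n a f)) => [T|S|T|S|T _].
- exact: slide_down_qkt.
- exact: slide_up_qkt.
- by case/andP=> T_qkt _; apply: slide_downK.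
- by case/andP=> S_qkt _; apply: slide_upK.
- exact: weight_slide_down.
Qed.
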